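(* Let $f:[0,\infty)\to\mathbb{R}$ be a continuous superquadratic function and let $A\in\mathbb{M}_n^+$ be positive semidefinite. Then for every orthonormal basis $\{\mathbf{u}_1,\dots,\mathbf{u}_n\}$ of $\mathbb{C}^n$, $$\sum_{j=1}^n f(\langle A\mathbf{u}_j,\mathbf{u}_j\rangle)+\sum_{j=1}^n\big\langle f(|A-\langle A\mathbf{u}_j,\mathbf{u}_j\rangle I|)\mathbf{u}_j,\mathbf{u}_j\big\rangle\le \mathrm{Tr}\, f(A).$$ Moreover, equality holds if $f$ is non-negative and $\mathbf{u}_1,\dots,\mathbf{u}_n$ are eigenvectors of $A$.
   Context: A function $f:[0,\infty)\to\mathbb{R}$ is called superquadratic if for every $s\ge 0$ there exists a constant $C_s\in\mathbb{R}$ such that $f(t)\ge f(s)+C_s(t-s)+f(|t-s|)$ for all $t\ge0$. $f(X)$ is defined by the spectral functional calculus, $|X|=(X^*X)^{1/2}$, $\langle\cdot,\cdot\rangle$ is the standard inner product on $\mathbb{C}^n$, and $\mathrm{Tr}$ is the usual matrix trace. *)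

(* complex matrices over a numClosedFieldType C
   (an algebraically closed field with conjugation and the partial order
   whose nonnegative elements are the nonnegative reals, e.g. algC). *)
From HB Require Import structures.
From mathcomp Require Import all_boot all_order all_algebra.
Set Implicit Arguments. Unset Strict Implicit. Unset Printing Implicit Defensive.
Import Order.TTheory GRing.Theory Num.Theory Num.Def.
Local Open Scope ring_scope.

Definition adjmx {C : numClosedFieldType} m n (M : 'M[C]_(m, n)) : 'M[C]_(n, m) :=
  (map_mx conjC M)^T.

Definition inner {C : numClosedFieldType} n (x y : 'cV[C]_n) : C :=
  (adjmx y *m x) 0 0.

Definition psdmx {C : numClosedFieldType} n (A : 'M[C]_n) : Prop :=
  A \is hermsymmx /\ forall x : 'cV[C]_n, 0 <= inner (A *m x) x.

(* spectral functional calculus g(A) for a normal matrix A, via the unitary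
   diagonalisation A = P^-1 diag(sp) P provided by mathcomp's spectral.v *)
Definition mxfun {C : numClosedFieldType} n (g : C -> C) (A : 'M[C]_n) : 'M[C]_n :=
  invmx (spectralmx A) *m diag_mx (map_mx g (spectral_diag A)) *m spectralmx A.

Definition mxabs {C : numClosedFieldType} n (X : 'M[C]_n) : 'M[C]_n :=
  mxfun (fun x : C => sqrtC x) (adjmx X *m X).

(* f : [0,oo) -> R, real-valued on [0,oo) *)
Definition real_on_nonneg {C : numClosedFieldType} (f : C -> C) : Prop :=
  forall t : C, 0 <= t -> f t \is Num.real.

Definition continuous_on_nonneg {C : numClosedFieldType} (f : C -> C) : Prop :=
  forall x : C, 0 <= x -> forall eps : C, 0 < eps ->
    exists2 delta : C, 0 < delta &
      forall y : C, 0 <= y -> `|y - x| < delta -> `|f y - f x| < eps.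

Definition superquadratic {C : numClosedFieldType} (f : C -> C) : Prop :=
  forall s : C, 0 <= s -> exists2 Cs : C, Cs \is Num.real &
    forall t : C, 0 <= t -> f s + Cs * (t - s) + f `|t - s| <= f t.

(* orthonormal family of n vectors in C^n (hence an orthonormal basis) *)
Definition orthonormal_basis {C : numClosedFieldType} n (u : 'I_n -> 'cV[C]_n) : Prop :=
  forall i j : 'I_n, inner (u i) (u j) = (i == j)%:R.

(* Diagonalise A = P^* diag(d) P with P unitary.  For a unit vector x the
   weights w_k = |(P x)_k|^2 sum to 1, <g(A) x, x> = sum_k g(d_k) w_k for every g,
   and |A - a I| = P^* diag(|d - a|) P.  Taking a = <A x, x> = sum_k d_k w_k and
   averaging the superquadratic inequality
     f(a) + C_a (d_k - a) + f(|d_k - a|) <= f(d_k)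
   against w, the linear term vanishes; this is the inequality for one vector,
   and summing it over an orthonormal basis yields the trace.  For an
   eigenvector, w is supported on the k with d_k = a, and f(0) = 0 (forced by
   superquadraticity and f >= 0) turns every averaged inequality into an
   equality. *)

From HB Require Import structures.
From mathcomp Require Import all_boot all_order all_algebra.
Set Implicit Arguments. Unset Strict Implicit. Unset Printing Implicit Defensive.
Import Order.TTheory GRing.Theory Num.Theory Num.Def.
Local Open Scope ring_scope.
Local Open Scope sesquilinear_scope.

Lemma exists_interp_poly (F : fieldType) (g : F -> F) (s : seq F) :
  exists p : {poly F}, {in s, forall x, p.[x] = g x}.
Proof.
elim: s => [|y s [p Hp]]; first by exists 0.
have [ys|yNs] := boolP (y \in s).
  by exists p => x; rewrite inE => /orP[/eqP->|]; apply: Hp.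
pose q := \prod_(z <- s) ('X - z%:P).
have qy : q.[y] != 0.
  rewrite horner_prod prodf_seq_neq0; apply/allP => z zs /=.
  by rewrite hornerXsubC subr_eq0; apply: contraNneq yNs => ->.
have q0 x : x \in s -> q.[x] = 0.
  by move=> xs; rewrite horner_prod (big_rem x) //= hornerXsubC subrr mul0r.
exists (p + ((g y - p.[y]) / q.[y]) *: q) => x; rewrite inE => /orP[/eqP->|xs].
  by rewrite hornerD hornerZ divfK // addrC subrK.
by rewrite hornerD hornerZ (q0 x xs) mulr0 addr0 Hp.
Qed.

Lemma adjmxE (C : numClosedFieldType) m n (M : 'M[C]_(m, n)) : adjmx M = M ^t*.
Proof. by rewrite /adjmx map_trmx. Qed.

Lemma mxtrace_orthonormal_basis (C : numClosedFieldType) n (M : 'M[C]_n)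
    (u : 'I_n -> 'cV[C]_n) :
  orthonormal_basis u -> \tr M = \sum_j inner (M *m u j) (u j).
Proof.
move=> Hu; pose U : 'M[C]_n := \matrix_(i, j) u j i 0.
have UU : adjmx U *m U = 1%:M.
  apply/matrixP => i j; rewrite !mxE eq_sym -Hu /inner !mxE.
  by apply: eq_bigr => k _; rewrite /adjmx !mxE.
rewrite -{1}[M]mulmx1 -(mulmx1C UU) mulmxA mxtrace_mulC.
apply: eq_bigr => j _; rewrite /inner !mxE; apply: eq_bigr => k _.
by rewrite /adjmx !mxE; congr (_ * _); apply: eq_bigr => l _; rewrite mxE.
Qed.

Section UnitaryDiagonal.
Variables (C : numClosedFieldType) (n : nat).
Implicit Types (P : 'M[C]_n) (e : 'rV[C]_n) (x : 'cV[C]_n).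

Definition udiagmx P e := invmx P *m diag_mx e *m P.

Definition udiag_weight P x (k : 'I_n) := (P *m x) k 0 * ((P *m x) k 0)^*.

Lemma udiag_weight_ge0 P x k : 0 <= udiag_weight P x k.
Proof. exact: mul_conjC_ge0. Qed.

Lemma udiagmx_const {P} a : P \in unitmx -> udiagmx P (const_mx a) = a%:M.
Proof.
by move=> Pu; rewrite /udiagmx diag_const_mx mul_mx_scalar -scalemxAl mulVmx // scalemx1.
Qed.

Lemma udiagmxM P e1 e2 : P \in unitmx ->
  udiagmx P e1 *m udiagmx P e2 = udiagmx P (\row_k (e1 0 k * e2 0 k)).
Proof.
move=> Pu; rewrite /udiagmx !mulmxA mulmxK // -[invmx P *m _ *m diag_mx e2]mulmxA.
congr (_ *m _ *m _); apply/matrixP => i j; rewrite mul_diag_mx !mxE.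
by case: eqP => [->|]; rewrite ?mulr1n ?mulr0n ?mulr0.
Qed.

Lemma udiagmx_adj P e : P \is unitarymx ->
  adjmx (udiagmx P e) = udiagmx P (map_mx conjC e).
Proof.
move=> Pu; rewrite /udiagmx !adjmxE invmx_unitary // !trmx_mul !map_mxM trmxCK.
by rewrite tr_diag_mx map_diag_mx mulmxA.
Qed.

Lemma udiagmx_subr P e a : P \in unitmx ->
  udiagmx P e - a%:M = udiagmx P (\row_k (e 0 k - a)).
Proof.
move=> Pu; rewrite -(udiagmx_const a Pu) /udiagmx -mulmxBl -mulmxBr.
congr (_ *m _ *m _); apply/matrixP => i j; rewrite !mxE.
by case: eqP => [->|]; rewrite ?mulr1n ?mulr0n ?subr0.
Qed.

Lemma udiagmx_normal P e : P \is unitarymx -> udiagmx P e \is normalmx.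
Proof. by move=> Pu; apply/orthomx_spectral_subproof; exists (P, e). Qed.

Lemma inner_udiagmx P e x : P \is unitarymx ->
  inner (udiagmx P e *m x) x = \sum_k e 0 k * udiag_weight P x k.
Proof.
move=> Pu; rewrite /inner /udiagmx invmx_unitary // !mulmxA.
have -> : adjmx x *m P ^t* = adjmx (P *m x) by rewrite !adjmxE trmx_mul map_mxM.
rewrite -mulmxA mxE; apply: eq_bigr => k _.
by rewrite mul_mx_diag mxE /adjmx /udiag_weight !mxE mulrAC mulrC [_^* * _]mulrC.
Qed.

Lemma sum_udiag_weight P x : P \is unitarymx ->
  \sum_k udiag_weight P x k = inner x x.
Proof.
move=> Pu; rewrite -[x in inner x]mul1mx -(udiagmx_const 1 (unitarymx_unit Pu)).
by rewrite inner_udiagmx //; apply: eq_bigr => k _; rewrite mxE mul1r.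
Qed.

Lemma udiag_weight_eigen P e x l k : P \in unitmx ->
  udiagmx P e *m x = l *: x -> udiag_weight P x k = 0 \/ e 0 k = l.
Proof.
move=> Pu /(congr1 (mulmx P)); rewrite /udiagmx !mulmxA mulmxV // mul1mx.
rewrite -!mulmxA -scalemxAr => /matrixP/(_ k 0); rewrite mul_diag_mx !mxE.
move=> /eqP; rewrite -subr_eq0 -mulrBl mulf_eq0 subr_eq0.
by case/orP => /eqP => [|Pxk]; [right|left; rewrite /udiag_weight mxE Pxk mul0r].
Qed.

Lemma udiagmx_psd_ge0 P e k : P \is unitarymx ->
  (forall x, 0 <= inner (udiagmx P e *m x) x) -> 0 <= e 0 k.
Proof.
move=> Pu /(_ (invmx P *m delta_mx k 0)); rewrite inner_udiagmx //.
rewrite (bigD1 k) //= big1 ?addr0 => [|l /negPf lk].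
  by rewrite /udiag_weight mulKVmx ?unitarymx_unit // mxE !eqxx conjC1 !mulr1.
by rewrite /udiag_weight mulKVmx ?unitarymx_unit // mxE lk mul0r mulr0.
Qed.

End UnitaryDiagonal.

Section FunctionalCalculus.
Variables (C : numClosedFieldType) (n : nat).
Implicit Types (P : 'M[C]_n.+1) (e : 'rV[C]_n.+1).

Lemma udiagmx_horner P e (p : {poly C}) : P \in unitmx ->
  udiagmx P (map_mx (horner p) e) = horner_mx (udiagmx P e) p.
Proof. by move=> Pu; rewrite /udiagmx -horner_mx_diag -horner_mx_uconjC. Qed.

(* mxfun is defined through the diagonalisation chosen by spectralmx; a
   polynomial interpolating g on both spectra shows that any unitary
   diagonalisation computes the same matrix. *)
Lemma mxfun_udiagmx (g : C -> C) P e : P \is unitarymx ->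
  mxfun g (udiagmx P e) = udiagmx P (map_mx g e).
Proof.
move=> Pu; set M := udiagmx P e.
have /orthomx_spectralP defM := udiagmx_normal e Pu; rewrite -/M in defM.
set d := spectral_diag M in defM.
have [p Hp] := exists_interp_poly g (codom (e 0) ++ codom (d 0)).
have interp (v : 'rV_n.+1) : {subset codom (v 0) <= codom (e 0) ++ codom (d 0)} ->
    map_mx g v = map_mx (horner p) v.
  by move=> sv; apply/matrixP => i k; rewrite !mxE (ord1 i) Hp ?sv ?codom_f.
rewrite /mxfun -/d (interp e) => [|z ze]; last by rewrite mem_cat ze.
rewrite (interp d) => [|z zd]; last by rewrite mem_cat zd orbT.
rewrite -[_ *m spectralmx M]/(udiagmx _ _) !udiagmx_horner ?spectral_unit ?unitarymx_unit //.
by rewrite [udiagmx (spectralmx M) d]/udiagmx -defM.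
Qed.

Lemma mxabs_udiagmx_subr P e a : P \is unitarymx ->
  mxabs (udiagmx P e - a%:M) = udiagmx P (\row_k `|e 0 k - a|).
Proof.
move=> Pu; have Pu' := unitarymx_unit Pu.
rewrite udiagmx_subr // /mxabs udiagmx_adj // udiagmxM // mxfun_udiagmx //.
by congr udiagmx; apply/matrixP => i k; rewrite !mxE -normCKC sqrCK.
Qed.

End FunctionalCalculus.

Section Superquadratic.
Variables (C : numClosedFieldType) (f : C -> C).

Lemma superquadratic_le0_at0 : superquadratic f -> f 0 <= 0.
Proof.
move=> /(_ 0 (lexx 0)) [c _ /(_ 0 (lexx 0))].
by rewrite subrr mulr0 addr0 normr0 -{3}[f 0]addr0 lerD2l.
Qed.

Variables (I : finType) (w x : I -> C).
Hypotheses (w_ge0 : forall i, 0 <= w i) (w_sum1 : \sum_i w i = 1).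

Lemma superquadratic_jensen : superquadratic f -> (forall i, 0 <= x i) ->
  f (\sum_i x i * w i) + \sum_i f `|x i - \sum_j x j * w j| * w i
    <= \sum_i f (x i) * w i.
Proof.
move=> sqf x_ge0; set a := \sum_j x j * w j.
have a_ge0 : 0 <= a by apply: sumr_ge0 => i _; rewrite mulr_ge0.
have [c _ sqf_a] := sqf a a_ge0.
apply: le_trans (ler_sum _ (fun i _ => ler_wpM2r (w_ge0 i) (sqf_a _ (x_ge0 i)))).
under [X in _ <= X]eq_bigr => i _ do rewrite !mulrDl -mulrA mulrBl.
by rewrite !big_split /= -!mulr_sumr sumrB -mulr_sumr w_sum1 !mulr1 -/a subrr mulr0 addr0.
Qed.

Lemma concentrated_jensen_eq a : f 0 = 0 -> (forall i, w i = 0 \/ x i = a) ->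
  f a + \sum_i f `|x i - a| * w i = \sum_i f (x i) * w i.
Proof.
move=> f0 conc; rewrite big1 => [|i _]; last first.
  by case: (conc i) => ->; rewrite ?mulr0 // subrr normr0 f0 mul0r.
rewrite addr0 -[LHS]mulr1 -w_sum1 mulr_sumr; apply: eq_bigr => i _.
by case: (conc i) => ->; rewrite ?mulr0.
Qed.

End Superquadratic.

Section PsdInner.
Variables (C : numClosedFieldType) (n : nat) (f : C -> C) (A : 'M[C]_n.+1).
Hypothesis psdA : psdmx A.

Let P := spectralmx A.
Let d := spectral_diag A.
Let unitary_P : P \is unitarymx := spectral_unitarymx A.

Lemma psdmx_udiagmx : A = udiagmx P d.
Proof. by apply/orthomx_spectralP/hermitian_normalmx; case: psdA. Qed.

Lemma psdmx_spectral_diag_ge0 k : 0 <= d 0 k.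
Proof.
by apply: udiagmx_psd_ge0 unitary_P _ => x; rewrite -psdmx_udiagmx; case: psdA.
Qed.

Let w x := udiag_weight P x.

Lemma inner_psdmx x : inner (A *m x) x = \sum_k d 0 k * w x k.
Proof. by rewrite {1}psdmx_udiagmx inner_udiagmx. Qed.

Lemma inner_mxfun_psdmx (g : C -> C) x :
  inner (mxfun g A *m x) x = \sum_k g (d 0 k) * w x k.
Proof.
rewrite psdmx_udiagmx mxfun_udiagmx // inner_udiagmx //.
by apply: eq_bigr => k _; rewrite mxE.
Qed.

Lemma inner_mxfun_mxabs_psdmx (g : C -> C) a x :
  inner (mxfun g (mxabs (A - a%:M)) *m x) x = \sum_k g `|d 0 k - a| * w x k.
Proof.
rewrite psdmx_udiagmx mxabs_udiagmx_subr // mxfun_udiagmx // inner_udiagmx //.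
by apply: eq_bigr => k _; rewrite !mxE.
Qed.

Variable x : 'cV[C]_n.+1.
Hypothesis x_unit : inner x x = 1.

Lemma superquadratic_inner_psdmx : superquadratic f ->
  f (inner (A *m x) x) + inner (mxfun f (mxabs (A - (inner (A *m x) x)%:M)) *m x) x
    <= inner (mxfun f A *m x) x.
Proof.
move=> sqf; rewrite inner_mxfun_mxabs_psdmx inner_mxfun_psdmx inner_psdmx.
apply: superquadratic_jensen => //.
- exact: udiag_weight_ge0.
- by rewrite /w sum_udiag_weight.
- exact: psdmx_spectral_diag_ge0.
Qed.

Lemma eigen_inner_psdmx l : f 0 = 0 -> A *m x = l *: x ->
  f (inner (A *m x) x) + inner (mxfun f (mxabs (A - (inner (A *m x) x)%:M)) *m x) x
    = inner (mxfun f A *m x) x.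
Proof.
move=> f0 Ax; have -> : inner (A *m x) x = l.
  by rewrite Ax /inner -scalemxAr mxE -/(inner x x) x_unit mulr1.
rewrite inner_mxfun_mxabs_psdmx inner_mxfun_psdmx.
apply: concentrated_jensen_eq => // [|k]; first by rewrite /w sum_udiag_weight.
by apply: udiag_weight_eigen (unitarymx_unit unitary_P) _; rewrite -psdmx_udiagmx.
Qed.

End PsdInner.

Theorem proposition3p3 (C : numClosedFieldType) (n : nat) (f : C -> C)
  (A : 'M[C]_n) (u : 'I_n -> 'cV[C]_n) :
  real_on_nonneg f -> continuous_on_nonneg f -> superquadratic f ->
  psdmx A -> orthonormal_basis u ->
  (\sum_(j < n) f (inner (A *m u j) (u j))
     + \sum_(j < n) inner (mxfun f (mxabs (A - (inner (A *m u j) (u j))%:M)) *m u j) (u j)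
   <= \tr (mxfun f A))
  /\
  ((forall t : C, 0 <= t -> 0 <= f t) ->
   (forall j : 'I_n, exists l : C, A *m u j = l *: u j) ->
   \sum_(j < n) f (inner (A *m u j) (u j))
     + \sum_(j < n) inner (mxfun f (mxabs (A - (inner (A *m u j) (u j))%:M)) *m u j) (u j)
   = \tr (mxfun f A)).
Proof.
case: n A u => [|n] A u _ _ sqf psdA onb.
  by rewrite !big_ord0 addr0 /mxtrace big_ord0.
have u_unit j : inner (u j) (u j) = 1 by rewrite onb eqxx.
rewrite (mxtrace_orthonormal_basis _ onb) -big_split /=; split.
  by apply: ler_sum => j _; apply: superquadratic_inner_psdmx.
move=> f_ge0 eigen; have f0 : f 0 = 0.
  by apply/eqP; rewrite eq_le superquadratic_le0_at0 // f_ge0.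
apply: eq_bigr => j _; have [l Auj] := eigen j.
exact: eigen_inner_psdmx Auj.
Qed.
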